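(* Let $L_{\mathbb{Z}_p}$ be a lattice with integral non-degenerate quadratic form, and let $X\subseteq L^*_{\mathbb{Z}_p}$ be a subset whose $\mathbb{Q}_p$-span $\langle X\rangle_{\mathbb{Q}_p}$ is non-degenerate. Let $\mathrm{Stab}(X)\subseteq\mathrm{SO}'(L_{\mathbb{Z}_p})$ be the pointwise stabilizer of $X$ and $X^\perp_{\mathbb{Z}_p}=\{v\in L_{\mathbb{Z}_p}:\langle v,w\rangle=0\ \forall w\in X\}$ with the restricted form. Then restriction to $X^\perp_{\mathbb{Z}_p}$ is an isomorphism $\mathrm{Stab}(X)\xrightarrow{\sim}\mathrm{SO}'(X^\perp_{\mathbb{Z}_p})$; i.e. $\mathrm{Stab}(X)=\mathrm{SO}'(X^\perp_{\mathbb{Z}_p})$, every element of $\mathrm{SO}'(X^\perp_{\mathbb{Z}_p})$ extending (uniquely, by the identity on $\langle X\rangle_{\mathbb{Q}_p}$) to an element of $\mathrm{SO}'(L_{\mathbb{Z}_p})$.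
   Context: Bilinear form $\langle v,w\rangle=Q(v+w)-Q(v)-Q(w)$; integral means $Q(L_{\mathbb{Z}_p})\subseteq\mathbb{Z}_p$; for a lattice $\Lambda$ with non-degenerate form, $\Lambda^*=\{v\in\Lambda_{\mathbb{Q}_p}:\langle v,\Lambda\rangle\subseteq\mathbb{Z}_p\}$, $\mathrm{SO}(\Lambda)$ is the stabilizer of $\Lambda$ in $\mathrm{SO}(\Lambda_{\mathbb{Q}_p})$, and the discriminant kernel $\mathrm{SO}'(\Lambda)$ is the kernel of $\mathrm{SO}(\Lambda)\to\mathrm{Aut}(\Lambda^*/\Lambda)$. *)

From HB Require Import structures.
From mathcomp Require Import all_boot all_order all_algebra.
Set Implicit Arguments. Unset Strict Implicit. Unset Printing Implicit Defensive.
Import Order.TTheory GRing.Theory Num.Theory.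
Local Open Scope ring_scope.

Section QuadLattice.
Variable K : fieldType.

(* R : K -> Prop is a discrete valuation ring with fraction field K
   (the role of Z_p inside Q_p). *)
Definition is_dvr (R : K -> Prop) : Prop :=
  [/\ R 0, R 1,
      (forall x y, R x -> R y -> R (x - y)),
      (forall x y, R x -> R y -> R (x * y)) &
      exists pi : K, [/\ pi != 0, R pi, ~ R pi^-1 &
        forall x : K, x != 0 ->
          exists (u : K) (n : int), [/\ R u, R u^-1 & x = u * pi ^ n]]].

Variable V : vectType K.

Definition bil (Q : V -> K) (v w : V) : K := Q (v + w) - Q v - Q w.

Definition is_quadform (Q : V -> K) : Prop :=
  (forall (a : K) v, Q (a *: v) = a ^+ 2 * Q v) /\
  (forall w, linear_for *%R (fun v => bil Q v w)).

Definition qf_nondegenerate (Q : V -> K) : Prop :=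
  forall v, (forall w, bil Q v w = 0) -> v = 0.

Definition is_lattice (R : K -> Prop) (Lam : V -> Prop) : Prop :=
  exists b : (\dim {:V}).-tuple V, basis_of fullv b /\
    forall v, Lam v <-> exists c : 'I_(\dim {:V}) -> K,
        (forall i, R (c i)) /\ v = \sum_i c i *: b`_i.

Definition qf_integral (R : K -> Prop) (Q : V -> K) (Lam : V -> Prop) : Prop :=
  forall v, Lam v -> R (Q v).

Definition lat_dual (R : K -> Prop) (Q : V -> K) (Lam : V -> Prop) : V -> Prop :=
  fun v => forall l, Lam l -> R (bil Q v l).

Definition lfun_det (g : 'End(V)) : K :=
  \det (passmx.mxof (vbasis fullv) (vbasis fullv) g).

Definition in_SO (R : K -> Prop) (Q : V -> K) (Lam : V -> Prop) (g : 'End(V)) : Prop :=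
  [/\ lfun_det g = 1,
      (forall v, Q (g v) = Q v),
      (forall v, Lam v -> Lam (g v)) &
      (forall w, Lam w -> exists2 v, Lam v & g v = w)].

Definition in_SO' (R : K -> Prop) (Q : V -> K) (Lam : V -> Prop) (g : 'End(V)) : Prop :=
  in_SO R Q Lam g /\ (forall v, lat_dual R Q Lam v -> Lam (g v - v)).

End QuadLattice.

Definition lfun_restr (K : fieldType) (V : vectType K) (U : {vspace V}) (g : 'End(V))
  : 'End(subvs_of U) :=
  (linfun (vsproj U) \o g \o linfun (@vsval K V U))%VF.

(* Since W, the span of X, is non-degenerate, V is the orthogonal sum of W and
   W^perp, and Stab(X) consists of the elements of SO'(L) fixing W pointwise.
   These preserve W^perp and, in a basis adapted to the splitting, have block
   matrix diag(restriction, 1), so their determinant is that of the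
   restriction.  Write M for L restricted to W^perp.  The W^perp-component of
   any vector of dual(L) lies in dual(M); hence an element h of SO'(M),
   extended by the identity on W, moves every v in dual(L) by h u - u in M,
   which both keeps L stable (as L lies in dual(L)) and makes the extension
   trivial on dual(L)/L.  Conversely, the restriction of g is trivial on
   dual(M)/M because L is the dual of dual(L): for z in dual(L), g^-1 z - z
   lies in M. *)
From HB Require Import structures.
From mathcomp Require Import all_boot all_order all_algebra.
Set Implicit Arguments. Unset Strict Implicit. Unset Printing Implicit Defensive.
Import Order.TTheory GRing.Theory Num.Theory.
Local Open Scope ring_scope.

Lemma linfun_linearE (K : fieldType) (aT rT : vectType K) (f : aT -> rT) :
  linear f -> forall v, linfun f v = f v.
Proof.
move=> hf v.
pose fL : {linear aT -> rT} :=
  HB.pack f (GRing.isSemilinear.Build K aT rT _ f (GRing.semilinear_linear hf)).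
exact: (lfunE fL v).
Qed.

Section SubspaceRestriction.
Variables (K : fieldType) (V : vectType K) (S : {vspace V}).

Lemma lfun_restrE (g : 'End(V)) u : lfun_restr S g u = vsproj S (g (vsval u)).
Proof. by rewrite /lfun_restr !comp_lfunE !lfunE. Qed.

Lemma vsval_lfun_restr (g : 'End(V)) :
  (forall v, v \in S -> g v \in S) -> forall u, vsval (lfun_restr S g u) = g (vsval u).
Proof. by move=> gS u; rewrite lfun_restrE vsprojK // gS // subvsP. Qed.

Lemma lfun_restr_comp (g1 g2 : 'End(V)) : (forall v, v \in S -> g2 v \in S) ->
  lfun_restr S (g1 \o g2)%VF = (lfun_restr S g1 \o lfun_restr S g2)%VF.
Proof.
move=> g2S; apply/lfunP => u.
by rewrite [RHS]comp_lfunE !lfun_restrE comp_lfunE vsprojK // g2S // subvsP.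
Qed.

Lemma lfun_restr_inj (T : {vspace V}) (g1 g2 : 'End(V)) : (T + S = fullv)%VS ->
  (forall v, v \in S -> g1 v \in S) -> (forall v, v \in S -> g2 v \in S) ->
  (forall w, w \in T -> g1 w = g2 w) -> lfun_restr S g1 = lfun_restr S g2 -> g1 = g2.
Proof.
move=> TS g1S g2S g12T e12; apply/lfunP => v.
have /memv_addP[w hw [u hu ->]] : v \in (T + S)%VS by rewrite TS memvf.
rewrite !linearD /= g12T //; congr (_ + _).
have := congr1 (fun h : 'End(subvs_of S) => vsval (h (vsproj S u))) e12.
by rewrite /= !vsval_lfun_restr // vsprojK.
Qed.

Lemma vsval_img : (linfun (@vsval K V S) @: fullv)%VS = S.
Proof.
apply/vspaceP => v; apply/memv_imgP/idP => [[u _ ->]|vS]; first by rewrite lfunE subvsP.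
by exists (vsproj S v); rewrite ?memvf // lfunE /= vsprojK.
Qed.

End SubspaceRestriction.

Section Determinant.
Variables (K : fieldType) (V : vectType K).

Lemma mxof_coord (U : vectType K) (e e' : (\dim {:U}).-tuple U) (g : 'End(U)) i j :
  passmx.mxof e e' g i j = coord e' j (g e`_i).
Proof. by rewrite !(mxE, comp_lfunE, lfunE) /= passmx.vecof_delta. Qed.

Lemma lfun_det_basis (U : vectType K) (e : (\dim {:U}).-tuple U) (g : 'End(U)) :
  basis_of fullv e -> lfun_det g = \det (passmx.mxof e e g).
Proof.
move=> eb; rewrite /lfun_det; set v := vbasis fullv.
have vb : basis_of fullv v by exact: vbasisP.
have -> : passmx.mxof v v g = passmx.mxof v e \1 *m passmx.mxof e e g *m passmx.mxof e v \1.
  by rewrite -!passmx.mxof_comp // comp_lfun1r comp_lfun1l.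
rewrite !det_mulmx mulrC mulrA -det_mulmx -passmx.mxof_comp // comp_lfun1l.
by rewrite passmx.mxof1 ?(basis_free eb) // det1 mul1r.
Qed.

Lemma lfun_det_coord (U : vectType K) n (e : n.-tuple U) (g : 'End(U)) :
  n = \dim {:U} -> basis_of fullv e -> lfun_det g = \det (\matrix_(i, j) coord e j (g e`_i)).
Proof.
move=> hn; subst n => eb; rewrite (lfun_det_basis g eb).
by congr (\det _); apply/matrixP => i j; rewrite mxof_coord mxE.
Qed.

Section BlockBasis.
Variables (S : {vspace V}) (a b : nat) (e : (a + b).-tuple V).
Variables (f : a.-tuple (subvs_of S)) (t : b.-tuple V).
Hypotheses (ef : (e : seq V) = map vsval f ++ t) (e_free : free e).
Hypothesis f_basis : basis_of fullv f.

Lemma nth_cat_lshift (k : 'I_a) : e`_(lshift b k) = vsval f`_k.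
Proof. by rewrite ef /= nth_cat size_map size_tuple ltn_ord (nth_map 0) ?size_tuple. Qed.

Lemma nth_cat_rshift (k : 'I_b) : e`_(rshift a k) = t`_k.
Proof. by rewrite ef /= nth_cat size_map size_tuple ltnNge leq_addr /= addKn. Qed.

Lemma coord_cat_vsval (y : subvs_of S) j :
  coord e j (vsval y) = if split j is inl l then coord f l y else 0.
Proof.
rewrite (coord_basis f_basis (memvf y)) linear_sum /=.
have -> : \sum_(l < a) vsval (coord f l y *: f`_l) =
    \sum_(j < a + b) (if split j is inl l then coord f l y else 0) *: e`_j.
  rewrite big_split_ord /= [X in _ + X]big1 ?addr0 => [|k _]; last first.
    by rewrite (unsplitK (inr k)) scale0r.
  by apply: eq_bigr => l _; rewrite (unsplitK (inl l)) nth_cat_lshift.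
rewrite coord_sum_free //; case: (split j) => // l.
by rewrite coord_sum_free ?(basis_free f_basis).
Qed.

Lemma det_coord_block (g : 'End(V)) :
  (forall v, v \in S -> g v \in S) -> (forall k : 'I_b, g t`_k = t`_k) ->
  \det (\matrix_(i, j) coord e j (g e`_i)) =
  \det (\matrix_(i, j) coord f j (lfun_restr S g f`_i)).
Proof.
move=> gS gt; set A := \matrix_(i < a, j < a) _.
have -> : \matrix_(i, j) coord e j (g e`_i) = block_mx A 0 0 1%:M.
  apply/matrixP => i j; rewrite mxE -[i]splitK -[j]splitK.
  case: (split i) => i'; case: (split j) => j'.
  - rewrite block_mxEul mxE nth_cat_lshift -vsval_lfun_restr // coord_cat_vsval.
    by rewrite (unsplitK (inl j')).
  - rewrite block_mxEur mxE nth_cat_lshift -vsval_lfun_restr // coord_cat_vsval.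
    by rewrite (unsplitK (inr j')).
  - rewrite block_mxEdl mxE nth_cat_rshift gt -nth_cat_rshift coord_free //.
    by rewrite -val_eqE /= gtn_eqF // ltn_addr.
  - rewrite block_mxEdr mxE nth_cat_rshift gt -nth_cat_rshift coord_free //.
    by rewrite -val_eqE /= eqn_add2l -val_eqE.
by rewrite det_ublock det1 mulr1.
Qed.

End BlockBasis.

Lemma lfun_det_restr (S T : {vspace V}) (g : 'End(V)) :
  (S :&: T = 0)%VS -> (S + T = fullv)%VS ->
  (forall v, v \in S -> g v \in S) -> (forall v, v \in T -> g v = v) ->
  lfun_det g = lfun_det (lfun_restr S g).
Proof.
move=> dST fST gS gT.
set f := vbasis (@fullv K (subvs_of S)); set t := vbasis T.
have fb : basis_of fullv f := vbasisP _.
have hs : size (map vsval f ++ t) == (\dim {:subvs_of S} + \dim T)%N.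
  by rewrite size_cat size_map !size_tuple.
pose e := Tuple hs.
have eb : basis_of fullv e.
  rewrite -fST; apply: cat_basis; first by rewrite directvE /= dimv_disjoint_sum.
    have := limg_basis_of (f := linfun (@vsval K V S)) _ fb.
    rewrite vsval_img (eq_map (lfunE _)); apply; apply/eqP; rewrite -subv0.
    apply/subvP => u /memv_capP [_]; rewrite memv_ker lfunE /= memv0 => /eqP h.
    exact/eqP/subvs_inj.
  exact: vbasisP.
have dimST : (\dim {:subvs_of S} + \dim T)%N = \dim {:V}.
  by rewrite [\dim {:subvs_of S}]dimvf -dimv_disjoint_sum // fST.
rewrite (lfun_det_coord g dimST eb) (lfun_det_coord _ (erefl _) fb).
apply: det_coord_block => // [|k]; first exact: basis_free eb.
by rewrite gT // vbasis_mem // mem_nth // size_tuple.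
Qed.

End Determinant.

Section Bilinear.
Variables (K : fieldType) (V : vectType K) (Q : V -> K).
Hypothesis hQ : is_quadform Q.

Lemma bilC v w : bil Q v w = bil Q w v.
Proof. by rewrite /bil [w + v]addrC addrAC. Qed.

Lemma bil_linear v w a u : bil Q (a *: u + v) w = a * bil Q u w + bil Q v w.
Proof. exact: (hQ.2 w a u v). Qed.

Lemma quadform0 : Q 0 = 0.
Proof. by have := hQ.1 0 0; rewrite scale0r expr0n /= mul0r. Qed.

Lemma bil0l w : bil Q 0 w = 0.
Proof. by rewrite /bil add0r quadform0 subr0 subrr. Qed.

Lemma bilDl u v w : bil Q (u + v) w = bil Q u w + bil Q v w.
Proof. by have := bil_linear v w 1 u; rewrite scale1r mul1r. Qed.

Lemma bilZl a u w : bil Q (a *: u) w = a * bil Q u w.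
Proof. by have := bil_linear 0 w a u; rewrite addr0 bil0l addr0. Qed.

Lemma bilBl u v w : bil Q (u - v) w = bil Q u w - bil Q v w.
Proof.
have := bil_linear u w (-1) v; rewrite scaleN1r mulN1r => h.
by rewrite addrC h addrC.
Qed.

Lemma bilDr u v w : bil Q w (u + v) = bil Q w u + bil Q w v.
Proof. by rewrite !(bilC w) bilDl. Qed.

Lemma bilBr u v w : bil Q w (u - v) = bil Q w u - bil Q w v.
Proof. by rewrite !(bilC w) bilBl. Qed.

Lemma bil_sumr n (c : 'I_n -> K) (b : 'I_n -> V) w :
  bil Q w (\sum_i c i *: b i) = \sum_i c i * bil Q w (b i).
Proof.
rewrite bilC (big_morph (fun v => bil Q v w) (fun u v => bilDl u v w) (bil0l w)).
by apply: eq_bigr => i _; rewrite bilZl bilC.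
Qed.

Lemma bil_lfun v : linear (fun w : V => (bil Q v w : K^o)).
Proof. by move=> a u w; rewrite /= bilDr bilC bilZl bilC. Qed.

Lemma bil_row_linear n (b : 'I_n -> V) : linear (fun y : V => \row_j bil Q y (b j)).
Proof. by move=> a u w; apply/rowP => j; rewrite !mxE bil_linear. Qed.

Lemma quadformD v w : Q (v + w) = Q v + Q w + bil Q v w.
Proof. by rewrite /bil -[Q (v + w) - Q v - Q w]addrA -opprD [RHS]addrC subrK. Qed.

Lemma bil_subvs (S : {vspace V}) (x y : subvs_of S) :
  bil (fun u : subvs_of S => Q (vsval u)) x y = bil Q (vsval x) (vsval y).
Proof. by rewrite /bil linearD. Qed.

Lemma quadform_subvs (S : {vspace V}) : is_quadform (fun u : subvs_of S => Q (vsval u)).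
Proof.
split=> [a u|w a u v]; first by rewrite linearZ hQ.1.
by rewrite /= !bil_subvs linearD linearZ bil_linear.
Qed.

End Bilinear.

Section Isometry.
Variables (K : fieldType) (V : vectType K) (Q : V -> K) (g : 'End(V)).
Hypothesis hg : forall v, Q (g v) = Q v.

Lemma bil_isometry v w : bil Q (g v) (g w) = bil Q v w.
Proof. by rewrite /bil -linearD !hg. Qed.

Lemma isometry_lker0 : is_quadform Q -> qf_nondegenerate Q -> lker g == 0%VS.
Proof.
move=> hQ hnd; rewrite -subv0; apply/subvP => v; rewrite memv_ker memv0 => /eqP gv.
by apply/eqP/hnd => w; rewrite -bil_isometry gv bil0l.
Qed.

End Isometry.

Section Lattice.
Variables (K : fieldType) (V : vectType K) (Q : V -> K) (R : K -> Prop) (L : V -> Prop).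
Hypotheses (hQ : is_quadform Q) (hR : is_dvr R) (hL : is_lattice R L).

Lemma dvr0 : R 0.
Proof. by case: hR. Qed.

Lemma dvrB x y : R x -> R y -> R (x - y).
Proof. by case: hR => _ _ h _ _; apply: h. Qed.


Lemma lattice0 : L 0.
Proof.
case: hL => b [_ hb]; apply/hb; exists (fun=> 0); split=> [i|]; first exact: dvr0.
by rewrite big1 // => i _; rewrite scale0r.
Qed.

Lemma latticeB u v : L u -> L v -> L (u - v).
Proof.
case: hL => b [_ hb] /hb [c1 [h1 ->]] /hb [c2 [h2 ->]]; apply/hb.
exists (fun i => c1 i - c2 i); split=> [i|]; first exact: dvrB.
by rewrite -sumrB; apply: eq_bigr => i _; rewrite scalerBl.
Qed.

Lemma latticeD u v : L u -> L v -> L (u + v).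
Proof. by move=> hu hv; have := latticeB hu (latticeB lattice0 hv); rewrite sub0r opprK. Qed.

Lemma lattice_sub_dual : qf_integral R Q L -> forall v, L v -> lat_dual R Q L v.
Proof.
move=> hint v hv l hl.
by apply: dvrB; [apply: dvrB|]; apply: hint => //; apply: latticeD.
Qed.

Lemma dual_basis_exists : qf_nondegenerate Q -> forall b : (\dim {:V}).-tuple V,
  basis_of fullv b ->
  forall i : 'I_(\dim {:V}), exists y, forall j : 'I_(\dim {:V}), bil Q y b`_j = (i == j)%:R.
Proof.
move=> hnd b bb i.
pose phi : 'Hom(V, 'rV[K]_(\dim {:V})) := linfun (fun y => \row_j bil Q y b`_j).
have phiE y j : phi y 0 j = bil Q y b`_j.
  by rewrite linfun_linearE ?mxE //; apply: bil_row_linear.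
have ker0 : lker phi == 0%VS.
  rewrite -subv0; apply/subvP => y; rewrite memv_ker memv0 => /eqP hy.
  apply/eqP/hnd => w; rewrite (coord_basis bb (memvf w)) bil_sumr // big1 // => j _.
  by rewrite -phiE hy mxE mulr0.
have img : limg phi = fullv.
  have := limg_ker_dim phi fullv; rewrite capfv (eqP ker0) dimv0 add0n => hd.
  by apply/eqP; rewrite eqEdim subvf /= hd !dimvf dim_matrix mul1r.
have /memv_imgP [y _ hy] : delta_mx 0 i \in limg phi by rewrite img memvf.
by exists y => j; rewrite -phiE -hy mxE eqxx eq_sym.
Qed.

Lemma lattice_bidual : qf_nondegenerate Q ->
  forall v, (forall z, lat_dual R Q L z -> R (bil Q v z)) -> L v.
Proof.
move=> hnd v hv; case: hL => b [bb hb].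
apply/hb; exists (coord b ^~ v); split=> [i|]; last exact: coord_basis bb (memvf v).
have [y hy] := dual_basis_exists hnd bb i.
have bil_dual u : bil Q y u = coord b i u.
  rewrite {1}(coord_basis bb (memvf u)) bil_sumr // (bigD1 i) //= hy eqxx mulr1.
  by rewrite big1 ?addr0 // => j hj; rewrite hy eq_sym (negPf hj) mulr0.
rewrite -bil_dual bilC; apply: hv => l /hb [c [hc ->]].
by rewrite bil_dual coord_sum_free ?(basis_free bb).
Qed.

End Lattice.

Section OrthogonalComplement.
Variables (K : fieldType) (V : vectType K) (Q : V -> K) (W Wp : {vspace V}).
Hypothesis hQ : is_quadform Q.
Hypothesis hWp : forall v, v \in Wp <-> (forall w, w \in W -> bil Q v w = 0).

Lemma isometry_orth_stable (g : 'End(V)) : (forall v, Q (g v) = Q v) ->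
  (forall w, w \in W -> g w = w) -> forall u, u \in Wp -> g u \in Wp.
Proof.
move=> hg gW u /hWp hu; apply/hWp => w hw.
by rewrite -(gW w hw) bil_isometry // hu.
Qed.

Hypothesis hWnd : forall w, w \in W -> (forall w', w' \in W -> bil Q w w' = 0) -> w = 0.

Lemma orth_cap : (W :&: Wp = 0)%VS.
Proof.
apply/eqP; rewrite -subv0; apply/subvP => u /memv_capP [uW /hWp uWp].
by rewrite memv0; apply/eqP/hWnd => // w' hw'; rewrite bilC uWp.
Qed.

Lemma orth_sum : (W + Wp = fullv)%VS.
Proof.
pose bw := vbasis W.
pose phi : 'Hom(V, 'rV[K]_(\dim W)) := linfun (fun y => \row_j bil Q y bw`_j).
have phiE y j : phi y 0 j = bil Q y bw`_j.
  by rewrite linfun_linearE ?mxE //; apply: bil_row_linear.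
have kerWp : (lker phi <= Wp)%VS.
  apply/subvP => y; rewrite memv_ker => /eqP hy; apply/hWp => w hw.
  rewrite (coord_vbasis hw) bil_sumr // big1 // => j _.
  by rewrite -phiE hy mxE mulr0.
have imgW : (\dim (phi @: fullv) <= \dim W)%N.
  by have := dimvS (subvf (phi @: fullv)); rewrite dimvf dim_matrix mul1r.
apply/eqP; rewrite eqEdim subvf /= dimv_disjoint_sum ?orth_cap //.
by rewrite -(limg_ker_dim phi) capfv addnC leq_add ?dimvS.
Qed.

Lemma orth_decomp v : exists2 w, w \in W & exists2 u, u \in Wp & v = w + u.
Proof. by apply/memv_addP; rewrite orth_sum memvf. Qed.

Hypothesis hnd : qf_nondegenerate Q.

Lemma orth_nondegenerate : qf_nondegenerate (fun u : subvs_of Wp => Q (vsval u)).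
Proof.
move=> u hu; apply/subvs_inj/hnd => v; have [w hw [u' hu' ->]] := orth_decomp v.
have := hu (vsproj Wp u'); rewrite bil_subvs vsprojK // => hu'0.
by rewrite bilDr // hu'0 addr0 (proj1 (hWp _) (subvsP u) w hw).
Qed.

End OrthogonalComplement.

Lemma daddv_pi_compl0 (K : fieldType) (V : vectType K) (U T : {vspace V}) v :
  (U :&: T = 0)%VS -> v \in T -> daddv_pi U T v = 0.
Proof.
move=> dUT vT.
have vUT : v \in (U + T)%VS by apply: (subvP (addvSr U T)).
have := daddv_pi_add dUT vUT.
have dTU : (T :&: U = 0)%VS by rewrite capvC.
rewrite (daddv_pi_id dTU vT) => h.
by apply: (addIr v); rewrite h add0r.
Qed.

Definition orth_extend (K : fieldType) (V : vectType K) (W Wp : {vspace V})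
  (h : 'End(subvs_of Wp)) : 'End(V) :=
  (daddv_pi W Wp + (linfun (@vsval K V Wp) \o h \o linfun (vsproj Wp) \o daddv_pi Wp W))%VF.

Section Stabilizer.
Variables (K : fieldType) (V : vectType K) (Q : V -> K) (R : K -> Prop) (L : V -> Prop).
Variables (W Wp : {vspace V}).
Hypotheses (hQ : is_quadform Q) (hnd : qf_nondegenerate Q).
Hypotheses (hR : is_dvr R) (hL : is_lattice R L) (hint : qf_integral R Q L).
Hypothesis hWp : forall v, v \in Wp <-> (forall w, w \in W -> bil Q v w = 0).
Hypothesis hWnd : forall w, w \in W -> (forall w', w' \in W -> bil Q w w' = 0) -> w = 0.

Local Notation QM := (fun u : subvs_of Wp => Q (vsval u)).
Local Notation LM := (fun u : subvs_of Wp => L (vsval u)).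

Lemma lfun_det_orth (g : 'End(V)) : (forall u, u \in Wp -> g u \in Wp) ->
  (forall w, w \in W -> g w = w) -> lfun_det g = lfun_det (lfun_restr Wp g).
Proof.
apply: lfun_det_restr; first by rewrite capvC (orth_cap hWp hWnd).
by rewrite addvC (orth_sum hQ hWp hWnd).
Qed.

Section Restriction.
Variable g : 'End(V).
Hypotheses (gW : forall w, w \in W -> g w = w) (hQg : forall v, Q (g v) = Q v).

Let gWp := isometry_orth_stable hWp hQg gW.
Let restrK := vsval_lfun_restr gWp.

Lemma restr_in_SO : in_SO R Q L g -> in_SO R QM LM (lfun_restr Wp g).
Proof.
case=> hdet _ gL gLonto; split.
- by rewrite -lfun_det_orth.
- by move=> u; rewrite restrK hQg.
- by move=> u hu; rewrite restrK; apply: gL.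
- move=> u hu; have [v hv gv] := gLonto _ hu.
  have vWp : v \in Wp.
    apply/hWp => w hw; rewrite -(bil_isometry hQg) gv gW //.
    exact: (proj1 (hWp _) (subvsP u)).
  by exists (vsproj Wp v); rewrite ?vsprojK //; apply: subvs_inj; rewrite restrK vsprojK.
Qed.

Lemma restr_disc_trivial : in_SO' R Q L g ->
  forall u, lat_dual R QM LM u -> LM (lfun_restr Wp g u - u).
Proof.
case=> -[_ _ gL _] gdisc u hu; rewrite linearB /= restrK.
apply: (lattice_bidual hQ hL hnd) => z hz.
set z' := (g^-1)%VF z.
have gz : g z' = z by rewrite lker0_lfunVK // (isometry_lker0 hQg hQ hnd).
have z'dual : lat_dual R Q L z'.
  by move=> l hl; rewrite -(bil_isometry hQg) gz; apply/hz/gL.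
have Lz'z : L (z' - z).
  by have := latticeB hR hL (lattice0 hR hL) (gdisc _ z'dual); rewrite gz sub0r opprB.
have z'zWp : z' - z \in Wp.
  by apply/hWp => w hw; rewrite bilBl // -{1}gz -{2}(gW hw) (bil_isometry hQg) subrr.
have := hu (vsproj Wp (z' - z)); rewrite bil_subvs vsprojK // bilBr //.
by rewrite bilBl // -[X in bil Q (g _) X]gz (bil_isometry hQg); apply.
Qed.

Lemma restr_in_SO' : in_SO' R Q L g -> in_SO' R QM LM (lfun_restr Wp g).
Proof. by move=> gSO; split; [apply: restr_in_SO; case: gSO | apply: restr_disc_trivial]. Qed.

End Restriction.

Lemma orth_dual_component v w u : lat_dual R Q L v -> w \in W -> u \in Wp -> v = w + u ->
  lat_dual R QM LM (vsproj Wp u).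
Proof.
move=> hv hw hu ev m hm; rewrite bil_subvs vsprojK //.
by have := hv _ hm; rewrite ev bilDl // bilC (proj1 (hWp _) (subvsP m) w hw) add0r.
Qed.

Section Extension.
Variable h : 'End(subvs_of Wp).
Local Notation g := (orth_extend W h).

Lemma orth_extendE w u : w \in W -> u \in Wp -> g (w + u) = w + vsval (h (vsproj Wp u)).
Proof.
have cWWp := orth_cap hWp hWnd; have cWpW : (Wp :&: W = 0)%VS by rewrite capvC.
move=> hw hu; rewrite add_lfunE !comp_lfunE !lfunE /= !linearD /=.
rewrite (daddv_pi_id cWWp hw) (daddv_pi_id cWpW hu).
by rewrite (daddv_pi_compl0 cWWp hu) (daddv_pi_compl0 cWpW hw) !linear0 addr0 add0r.
Qed.

Lemma orth_extend_fix w : w \in W -> g w = w.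
Proof. by move=> hw; have := orth_extendE hw (mem0v _); rewrite !addr0 !linear0 addr0. Qed.

Lemma orth_extend_subr v w u : w \in W -> u \in Wp -> v = w + u ->
  g v - v = vsval (h (vsproj Wp u) - vsproj Wp u).
Proof.
by move=> hw hu ->; rewrite orth_extendE // linearB /= vsprojK // opprD addrACA subrr add0r.
Qed.

Lemma orth_extend_stable u : u \in Wp -> g u \in Wp.
Proof. by move=> hu; have := orth_extendE (mem0v _) hu; rewrite !add0r => ->; apply: subvsP. Qed.

Lemma lfun_restr_orth_extend : lfun_restr Wp g = h.
Proof.
apply/lfunP => u; rewrite lfun_restrE -[vsval u]add0r orth_extendE ?mem0v ?subvsP //.
by rewrite add0r !vsvalK.
Qed.

Lemma orth_extend_in_SO' : in_SO' R QM LM h -> in_SO' R Q L g.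
Proof.
case=> -[hdet hQh hLh hon] hdisc.
have decomp := orth_decomp hQ hWp hWnd.
have Ldual := lattice_sub_dual hR hL hint.
have disc v : lat_dual R Q L v -> L (g v - v).
  move=> hv; have [w hw [u hu ev]] := decomp v.
  by rewrite (orth_extend_subr hw hu ev); apply/hdisc/(orth_dual_component hv hw hu ev).
split=> //; split.
- by rewrite (lfun_det_orth orth_extend_stable orth_extend_fix) lfun_restr_orth_extend.
- move=> v; have [w hw [u hu ->]] := decomp v.
  rewrite orth_extendE // !quadformD // !(bilC Q w) (proj1 (hWp _) hu w hw).
  by rewrite (proj1 (hWp _) (subvsP _) w hw); have := hQh (vsproj Wp u); rewrite vsprojK // => ->.
- by move=> v hv; have := latticeD hR hL (disc v (Ldual _ hv)) hv; rewrite subrK.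
move=> w' hw'; have [w hw [u hu ew]] := decomp w'.
have u0dual := orth_dual_component (Ldual _ hw') hw hu ew.
have hinj : lker h == 0%VS.
  exact: (isometry_lker0 hQh (quadform_subvs hQ Wp) (orth_nondegenerate hQ hWp hWnd hnd)).
set c0 := (h^-1)%VF (vsproj Wp u).
have hc0 : h c0 = vsproj Wp u by rewrite lker0_lfunVK.
have c0dual : lat_dual R QM LM c0.
  by move=> m hm; rewrite -(bil_isometry hQh) hc0; apply/u0dual/hLh.
have := hdisc _ c0dual; rewrite hc0 linearB /= vsprojK // => hLc0.
exists (w + vsval c0).
  have -> : w + vsval c0 = w' - (u - vsval c0) by rewrite ew opprB addrACA subrr addr0.
  exact: (latticeB hR hL hw' hLc0).
by rewrite orth_extendE ?subvsP // vsvalK hc0 vsprojK // ew.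
Qed.

End Extension.

End Stabilizer.

Section Span.
Variables (K : fieldType) (V : vectType K) (X : V -> Prop) (W : {vspace V}).
Hypothesis hW : (forall x, X x -> x \in W) /\
  (forall U : {vspace V}, (forall x, X x -> x \in U) -> (W <= U)%VS).

Lemma span_lfun_eq0 (rT : vectType K) (f : 'Hom(V, rT)) :
  (forall x, X x -> f x = 0) -> forall w, w \in W -> f w = 0.
Proof.
move=> hf w hw; have /subvP/(_ w hw) : (W <= lker f)%VS.
  by apply: hW.2 => x hx; rewrite memv_ker hf.
by rewrite memv_ker => /eqP.
Qed.

Lemma span_fix (g : 'End(V)) : (forall x, X x -> g x = x) -> forall w, w \in W -> g w = w.
Proof.
move=> gX w hw; apply/eqP; rewrite -subr_eq0; apply/eqP.
have := span_lfun_eq0 (f := (g - \1)%VF) _ hw; rewrite !lfun_simp; apply.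
by move=> x hx; rewrite !lfun_simp gX // subrr.
Qed.

Lemma span_orth (Q : V -> K) (Wp : {vspace V}) : is_quadform Q ->
  (forall v, v \in Wp <-> (forall x, X x -> bil Q v x = 0)) ->
  forall v, v \in Wp <-> (forall w, w \in W -> bil Q v w = 0).
Proof.
move=> hQ hWp v; split=> [/hWp hv w|hv]; last by apply/hWp => x hx; apply/hv/hW.1.
pose f : 'Hom(V, K^o) := linfun (fun w : V => (bil Q v w : K^o)).
have fE u : f u = bil Q v u by rewrite linfun_linearE //; apply: bil_lfun.
by move=> hw; rewrite -fE; apply: (span_lfun_eq0 (f := f) _ hw) => x hx; rewrite fE hv.
Qed.

End Span.

Theorem mainTheorem13 (K : fieldType) (R : K -> Prop) (V : vectType K)
  (Q : V -> K) (L : V -> Prop) (X : V -> Prop) (W Wp : {vspace V})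
  (hR : is_dvr R)
  (hQ : is_quadform Q)
  (hnd : qf_nondegenerate Q)
  (hL : is_lattice R L)
  (hint : qf_integral R Q L)
  (hX : forall x, X x -> lat_dual R Q L x)
  (hW : (forall x, X x -> x \in W) /\
        (forall U : {vspace V}, (forall x, X x -> x \in U) -> (W <= U)%VS))
  (hWnd : forall w, w \in W -> (forall w', w' \in W -> bil Q w w' = 0) -> w = 0)
  (hWp : forall v, v \in Wp <-> (forall x, X x -> bil Q v x = 0)) :
  let M : subvs_of Wp -> Prop := fun u => L (vsval u) in
  let QM : subvs_of Wp -> K := fun u => Q (vsval u) in
  let Stab : 'End(V) -> Prop :=
    fun g => in_SO' R Q L g /\ (forall x, X x -> g x = x) in
  [/\ (forall g, Stab g ->
         (forall v, v \in Wp -> g v \in Wp) /\ in_SO' R QM M (lfun_restr Wp g)),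
      (forall g1 g2, Stab g1 -> Stab g2 ->
         lfun_restr Wp (g1 \o g2)%VF = (lfun_restr Wp g1 \o lfun_restr Wp g2)%VF),
      (forall g1 g2, Stab g1 -> Stab g2 -> lfun_restr Wp g1 = lfun_restr Wp g2 -> g1 = g2) &
      (forall h, in_SO' R QM M h ->
         exists g, [/\ Stab g, lfun_restr Wp g = h & forall w, w \in W -> g w = w])].
Proof.
move=> M QM Stab.
have hWpW := span_orth hW hQ hWp.
have fixW g : Stab g -> forall w, w \in W -> g w = w by case=> _; apply: span_fix.
have isom g : Stab g -> forall v, Q (g v) = Q v by case=> -[[]].
have stable g (sg : Stab g) := isometry_orth_stable hWpW (isom g sg) (fixW g sg).
split.
- move=> g sg; split; first exact: stable.
  exact: (restr_in_SO' hQ hnd hR hL hWpW hWnd (fixW g sg) (isom g sg) sg.1).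
- by move=> g1 g2 _ s2; apply/lfun_restr_comp/stable.
- move=> g1 g2 s1 s2; apply: lfun_restr_inj (orth_sum hQ hWpW hWnd) (stable _ s1) (stable _ s2) _.
  by move=> w hw; rewrite !fixW.
move=> h hh; have gfix := orth_extend_fix hWpW hWnd h.
exists (orth_extend W h); split=> //; last exact: lfun_restr_orth_extend.
split; last by move=> x /hW.1; apply: gfix.
exact: (orth_extend_in_SO' hQ hnd hR hL hint hWpW hWnd hh).
Qed.
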